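(* Let $f\colon\mathbb R\to\mathbb R$ be continuous with $|f(x)|\leqslant a\cosh(bx)$ for all $x$, for some $a>0$, $b\in\mathbb R$. Fix $\lambda>0$, let $P_n = e^{-\lambda}\lambda^n/n!$, and for $k\geqslant1$ let $h_k\colon y\mapsto f(y)/k$. Let $\mathbb P$ be the set of compactly supported Borel probability measures on $\mathbb R$ with the topology in which $\rho_n\to\rho$ iff $\int\phi\,d\rho_n\to\int\phi\,d\rho$ for all continuous compactly supported $\phi\colon\mathbb R\to\mathbb R$. For $x\in\mathbb R$ define the operators $$\Sigma^f_x(\rho) = \sum_{n=0}^\infty P_n\,(h_{n+1})_\star\big(\delta_x*\rho^{*n}\big),\qquad \Sigma^f(\rho) = \sum_{n=0}^\infty P_n\,(h_{n+1})_\star\big(\rho^{*(n+1)}\big),$$ where $(h_k)_\star$ is pushforward, $*$ is convolution and $\rho^{*0}=\delta_0$. Then $\Sigma^f_x$ and $\Sigma^f$ are continuous on $\mathbb P$ (with values in probability measures on $\mathbb R$ with the same weak topology).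
   Context: $\delta_a$ is the Dirac measure at $a$; $\cosh$ is the hyperbolic cosine. *)

From HB Require Import structures.
From mathcomp Require Import all_boot all_order all_algebra.
From mathcomp Require Import all_classical all_reals all_analysis.
Set Implicit Arguments. Unset Strict Implicit. Unset Printing Implicit Defensive.
Import Order.TTheory GRing.Theory Num.Theory.
Import numFieldNormedType.Exports.
Local Open Scope classical_set_scope.
Local Open Scope ring_scope.

Section Defs.
Variable R : realType.
Local Open Scope ereal_scope.

Definition cosh (x : R) : R := ((expR x + expR (- x)) / 2)%R.

Definition poissonP (lam : R) (n : nat) : R :=
  (expR (- lam) * lam ^+ n / (n`!)%:R)%R.

Definition hk (f : R -> R) (k : nat) : R -> R := fun y => (f y / k%:R)%R.

Definition push (mu : set R -> \bar R) (g : R -> R) : set R -> \bar R :=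
  fun A => mu (g @^-1` A).

Definition conv (mu nu : set R -> \bar R) : set R -> \bar R :=
  fun A => \int[mu]_x nu ((fun y => x + y)%R @^-1` A).

Definition delta (a : R) : set R -> \bar R := @dirac _ R a R.

Fixpoint convn (rho : set R -> \bar R) (n : nat) : set R -> \bar R :=
  match n with
  | 0%N => delta 0%R
  | n'.+1 => conv rho (convn rho n')
  end.

Definition SigmaX (f : R -> R) (lam : R) (x : R) (rho : set R -> \bar R)
  : set R -> \bar R :=
  fun A => \sum_(0 <= n <oo)
    ((poissonP lam n)%:E * push (conv (delta x) (convn rho n)) (hk f n.+1) A).

Definition Sigma (f : R -> R) (lam : R) (rho : set R -> \bar R)
  : set R -> \bar R :=
  fun A => \sum_(0 <= n <oo)
    ((poissonP lam n)%:E * push (convn rho n.+1) (hk f n.+1) A).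

Definition is_probability (mu : set R -> \bar R) : Prop :=
  [/\ mu set0 = 0, (forall A, measurable A -> 0 <= mu A),
      semi_sigma_additive mu & mu setT = 1].

Definition compactly_supported (mu : set R -> \bar R) : Prop :=
  exists K : set R, compact K /\ mu (~` K) = 0.

Definition test_fun (phi : R -> R) : Prop :=
  continuous phi /\ compact (closure [set x | phi x != 0%R]).

Definition weak_cvg (mus : nat -> set R -> \bar R) (mu : set R -> \bar R)
  : Prop :=
  forall phi : R -> R, test_fun phi ->
    (fun n => \int[mus n]_x (phi x)%:E) @ \oo --> \int[mu]_x (phi x)%:E.

Definition inP (mu : set R -> \bar R) : Prop :=
  is_probability mu /\ compactly_supported mu.

Definition continuous_on_P (S : (set R -> \bar R) -> (set R -> \bar R))
  : Prop :=
  (forall rho, inP rho -> is_probability (S rho)) /\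
  (forall (rhos : nat -> set R -> \bar R) (rho : set R -> \bar R),
     (forall n, inP (rhos n)) -> inP rho -> weak_cvg rhos rho ->
     weak_cvg (fun n => S (rhos n)) (S rho)).

End Defs.

From Pilot Require Import Defs.
From HB Require Import structures.
From mathcomp Require Import all_boot all_order all_algebra.
From mathcomp Require Import all_classical all_reals all_analysis.
From mathcomp Require Import ring lra.
Import Order.TTheory GRing.Theory Num.Theory.
Import numFieldNormedType.Exports.

(* Against compactly supported test functions a sequence of probability
   measures on R converges iff it converges against all bounded continuous
   functions: a single probability measure is tight, and testing against the
   cutoffs (1 on [-L, L], 0 off [-(L+1), L+1]) carries its tightness along the
   sequence.  Weak convergence then survives the operations building Sigma:
   pushforward along the continuous maps h_k, convolution (if Q_n -> Q weakly, x |-> \int g (x + y) dQ_n(y)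
   converges uniformly on compacts, by equicontinuity, while P_n is tight), and
   Poisson mixtures (dominated convergence over the index n).  Finally Sigma
   only sees a measure through its values on Borel sets, so rho may be replaced
   by the genuine probability measure agreeing with it there. *)

Set Implicit Arguments. Unset Strict Implicit. Unset Printing Implicit Defensive.
Local Open Scope classical_set_scope.
Local Open Scope ring_scope.

Section integral_eq_on_measurable.
Context d (T : measurableType d) (R : realType).
Local Open Scope ereal_scope.
Import HBNNSimple.

Lemma eq_on_measurable_integral (m1 m2 : set T -> \bar R) (D : set T)
    (f : T -> \bar R) :
  (forall A, measurable A -> m1 A = m2 A) ->
  \int[m1]_(x in D) f x = \int[m2]_(x in D) f x.
Proof.
move=> m12; have sintegral12 (h : {nnsfun T >-> R}) :
    sintegral m1 h = sintegral m2 h.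
  by apply: eq_fsbigr => r _; rewrite m12 //; exact: measurable_funPTI.
by rewrite /integral; congr (ereal_sup _ - ereal_sup _);
  apply: eq_imagel => h _; exact: sintegral12.
Qed.

End integral_eq_on_measurable.

Section probability_of_set_function.
Variable R : realType.
Local Open Scope ereal_scope.

Lemma is_probability_eq (mu nu : set R -> \bar R) :
  (forall A, measurable A -> mu A = nu A) -> is_probability nu ->
  is_probability mu.
Proof.
move=> e [nu0 nu_ge0 nu_sigma nuT]; split; rewrite ?e //.
- by move=> A mA; rewrite e //; exact: nu_ge0.
- move=> F mF tF mUF; rewrite e //.
  by under eq_fun do under eq_bigr do rewrite e //; exact: nu_sigma.
Qed.

Section prob_of.
Variables (mu : set R -> \bar R) (hmu : is_probability mu).

(* [is_probability] says nothing about [mu] off the measurable sets, so [mu]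
   itself need not be a measure; its restriction is. *)
Definition measurable_restr : set R -> \bar R :=
  fun A => if `[< measurable A >] then mu A else 0.

Let restrE A : measurable A -> measurable_restr A = mu A.
Proof. by move=> mA; rewrite /measurable_restr asboolT. Qed.

Let restr0 : measurable_restr set0 = 0.
Proof. by rewrite restrE //; case: hmu. Qed.

Let restr_ge0 A : 0 <= measurable_restr A.
Proof.
by rewrite /measurable_restr; case: asboolP => // mA; case: hmu => _ + _ _; apply.
Qed.

Let restr_sigma_additive : semi_sigma_additive measurable_restr.
Proof.
move=> F mF tF mUF; rewrite restrE //.
under eq_fun do under eq_bigr do rewrite restrE //.
by case: hmu => _ _ + _; apply.
Qed.

Let restrT : measurable_restr setT = 1.
Proof. by rewrite restrE //; case: hmu. Qed.

HB.instance Definition _ := isMeasure.Build _ _ _ measurable_restr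
  restr0 restr_ge0 restr_sigma_additive.
HB.instance Definition _ := Measure_isProbability.Build _ _ _ measurable_restr
  restrT.

Definition prob_of : probability R R := measurable_restr.

Lemma prob_ofE A : measurable A -> prob_of A = mu A.
Proof. exact: restrE. Qed.

End prob_of.

End probability_of_set_function.

Section bounded_measurable.
Context d (T : measurableType d) (R : realType).
Implicit Types g h : T -> R.

Definition bounded_measurable g :=
  measurable_fun setT g /\ exists M : R, forall x, `|g x| <= M.

Lemma bounded_integrable (P : probability T R) g : bounded_measurable g ->
  P.-integrable setT (EFin \o g).
Proof.
case=> mg [M gM]; apply: measurable_bounded_integrable => //.
  by rewrite [X in (X < _)%E]probability_setT ltry.
exists M; split; first exact: num_real.
by move=> y My x _; exact: le_trans (gM x) (ltW My).
Qed.

Lemma bounded_measurable_cst (c : R) : bounded_measurable (fun=> c).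
Proof. by split; [exact: measurable_cst|exists `|c|]. Qed.

Lemma bounded_measurableD g h : bounded_measurable g -> bounded_measurable h ->
  bounded_measurable (fun x => g x + h x).
Proof.
move=> [mg [M gM]] [mh [N hN]]; split.
  exact: measurable_realfun.measurable_funD.
by exists (M + N) => x; apply: le_trans (ler_normD _ _) _; exact: lerD.
Qed.

Lemma bounded_measurableN g : bounded_measurable g ->
  bounded_measurable (fun x => - g x).
Proof.
move=> [mg [M gM]]; split; first exact: measurableT_comp.
by exists M => x; rewrite normrN.
Qed.

Lemma bounded_measurableB g h : bounded_measurable g -> bounded_measurable h ->
  bounded_measurable (fun x => g x - h x).
Proof. by move=> bg bh; exact/bounded_measurableD/bounded_measurableN. Qed.

Lemma bounded_measurableM g h : bounded_measurable g -> bounded_measurable h ->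
  bounded_measurable (fun x => g x * h x).
Proof.
move=> [mg [M gM]] [mh [N hN]]; split.
  exact: measurable_realfun.measurable_funM.
by exists (M * N) => x; rewrite normrM; apply: ler_pM.
Qed.

Lemma bounded_measurable_norm g : bounded_measurable g ->
  bounded_measurable (fun x => `|g x|).
Proof.
move=> [mg [M gM]]; split; first exact: measurableT_comp.
by exists M => x; rewrite normr_id.
Qed.

End bounded_measurable.
Arguments bounded_measurable_cst {d T R} c.

Section bounded_continuous.
Variable R : realType.
Implicit Types g h : R -> R.

Definition bounded_continuous g :=
  continuous g /\ exists M : R, forall x, `|g x| <= M.

Lemma bounded_continuous_measurable g :
  bounded_continuous g -> bounded_measurable g.
Proof.
by case=> cg gM; split => //; exact: measurable_realfun.continuous_measurable_fun.
Qed.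

Lemma bounded_continuous_comp g h :
  bounded_continuous g -> continuous h -> bounded_continuous (g \o h).
Proof.
move=> [cg [M gM]] ch; split; last by exists M => x; exact: gM.
by move=> x; exact: continuous_comp (ch x) (cg (h x)).
Qed.

Lemma bounded_continuous_bound g :
  bounded_continuous g -> exists2 M : R, 0 <= M & forall x, `|g x| <= M.
Proof. by case=> _ [M gM]; exists M => //; exact: le_trans (gM 0). Qed.

End bounded_continuous.

Section expectation.
Variable R : realType.
Implicit Types (P : probability R R) (g h : R -> R).

Definition Ex P g : R := \int[P]_x g x.

Lemma integralEx P g : bounded_measurable g ->
  (\int[P]_x (g x)%:E)%E = (Ex P g)%:E.
Proof.
by move=> bg; rewrite fineK //; exact/integrable_fin_num/bounded_integrable.
Qed.

Lemma Ex_cst P (c : R) : Ex P (fun=> c) = c.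
Proof. by rewrite /Ex Rintegral_cst // [X in fine X]probability_setT mulr1. Qed.

Lemma ExD P g h : bounded_measurable g -> bounded_measurable h ->
  Ex P (fun x => g x + h x) = Ex P g + Ex P h.
Proof. by move=> bg bh; rewrite /Ex RintegralD //; exact: bounded_integrable. Qed.

Lemma ExB P g h : bounded_measurable g -> bounded_measurable h ->
  Ex P (fun x => g x - h x) = Ex P g - Ex P h.
Proof. by move=> bg bh; rewrite /Ex RintegralB //; exact: bounded_integrable. Qed.

Lemma ExZ P (c : R) g : bounded_measurable g ->
  Ex P (fun x => c * g x) = c * Ex P g.
Proof. by move=> bg; rewrite /Ex RintegralZl //; exact: bounded_integrable. Qed.

Lemma ler_Ex P g h : bounded_measurable g -> bounded_measurable h ->
  (forall x, g x <= h x) -> Ex P g <= Ex P h.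
Proof.
by move=> bg bh gh; rewrite /Ex le_Rintegral //; exact: bounded_integrable.
Qed.

Lemma Ex_ge0 P g : bounded_measurable g -> (forall x, 0 <= g x) -> 0 <= Ex P g.
Proof.
move=> bg g0; rewrite -(Ex_cst P 0).
by apply: ler_Ex => //; exact: bounded_measurable_cst.
Qed.

Lemma normr_Ex_le P g : bounded_measurable g ->
  `|Ex P g| <= Ex P (fun x => `|g x|).
Proof.
by move=> bg; rewrite /Ex le_normr_Rintegral //; exact: bounded_integrable.
Qed.

Lemma normr_Ex_bound P g (M : R) : bounded_measurable g ->
  (forall x, `|g x| <= M) -> `|Ex P g| <= M.
Proof.
move=> bg gM; apply: le_trans (normr_Ex_le P bg) _; rewrite -[leRHS](Ex_cst P).
apply: ler_Ex => //; first exact: bounded_measurable_norm.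
exact: bounded_measurable_cst.
Qed.

Lemma integral_prob_of (mu : set R -> \bar R) (hmu : is_probability mu) g :
  bounded_measurable g -> (\int[mu]_x (g x)%:E)%E = (Ex (prob_of hmu) g)%:E.
Proof.
by move=> bg; rewrite -integralEx //; apply: eq_on_measurable_integral => A mA;
  rewrite prob_ofE.
Qed.

End expectation.

Section cutoff.
Variable R : realType.
Implicit Types (L x : R) (g : R -> R).

Definition cutoff L x : R := Num.min 1 (Num.max 0 (L + 1 - `|x|)).

Lemma cutoff_continuous L : continuous (cutoff L).
Proof.
rewrite (_ : cutoff L =
  (fun=> 1) \min ((fun=> 0) \max (fun x => L + 1 - `|x|))) //.
apply: min_fun_continuous; first exact: cst_continuous.
apply: max_fun_continuous; first exact: cst_continuous.
by move=> x; apply: cvgB; [exact: cvg_cst|exact: norm_continuous].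
Qed.

Lemma cutoff_ge0 L x : 0 <= cutoff L x.
Proof. by rewrite /cutoff le_min ler01 le_max lexx. Qed.

Lemma cutoff_le1 L x : cutoff L x <= 1.
Proof. by rewrite /cutoff ge_min lexx. Qed.

Lemma cutoff1 L x : `|x| <= L -> cutoff L x = 1.
Proof. by move=> xL; apply/min_idPl; rewrite le_max; apply/orP; right; lra. Qed.

Lemma cutoff0 L x : L + 1 <= `|x| -> cutoff L x = 0.
Proof.
by move=> Lx; rewrite /cutoff (@max_idPl _ _ 0 _ _) ?subr_le0 //; exact/min_idPr.
Qed.

Lemma bounded_continuous_cutoff L : bounded_continuous (cutoff L).
Proof.
split; first exact: cutoff_continuous.
by exists 1 => x; rewrite ger0_norm ?cutoff_ge0 ?cutoff_le1.
Qed.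

Lemma bounded_measurable_cutoff L : bounded_measurable (cutoff L).
Proof. exact/bounded_continuous_measurable/bounded_continuous_cutoff. Qed.

End cutoff.

Section test_functions.
Variable R : realType.
Implicit Types (g : R -> R).

Lemma test_fun_support g : test_fun g ->
  exists L : R, forall x, L < `|x| -> g x = 0.
Proof.
case=> _ /compact_bounded [M [_ hM]]; exists (M + 1) => x Mx.
apply/eqP/negPn/negP => gx.
have : `|x| <= M + 1 by apply: hM; [lra|exact: subset_closure].
by rewrite leNgt Mx.
Qed.

Lemma test_funP g (c : R) : continuous g ->
  (forall x, g x != 0 -> `|x| <= c) -> test_fun g.
Proof.
move=> cg gc; split => //.
apply: (@subclosed_compact _ _ `[- c, c]);
  [exact: closed_closure|exact: segment_compact|].
rewrite [X in _ `<=` X](closure_id _).1; last exact: itv_closed.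
by apply: closureS => x /= gx; rewrite in_itv /= -ler_norml; exact: gc.
Qed.

Lemma test_fun_bounded_continuous g : test_fun g -> bounded_continuous g.
Proof.
move=> tg; have [L gL] := test_fun_support tg; case: tg => cg _; split => //.
have : compact [set g x | x in `[- L, L]].
  apply: continuous_compact; last exact: segment_compact.
  exact: continuous_subspaceT.
case/compact_bounded => M [_ hM]; exists (`|M| + 1) => x.
have [xL|xL] := leP `|x| L; last by rewrite gL // normr0 addr_ge0.
apply: hM; first by have := ler_norm M; lra.
by exists x => //; rewrite /= in_itv /= -ler_norml.
Qed.

Lemma test_fun_cutoff L : test_fun (@cutoff R L).
Proof.
apply: (@test_funP _ (L + 1)); first exact: cutoff_continuous.
by move=> x; apply: contraR; rewrite -ltNge => /ltW /cutoff0 ->.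
Qed.

Lemma test_funM_cutoff g L : continuous g ->
  test_fun (fun x => g x * cutoff L x).
Proof.
move=> cg; apply: (@test_funP _ (L + 1)).
  by move=> x; apply: continuousM; [exact: cg|exact: cutoff_continuous].
by move=> x; apply: contraR; rewrite -ltNge => /ltW /cutoff0 ->; rewrite mulr0.
Qed.

Lemma test_fun_unif_continuous g : test_fun g -> forall e : R, 0 < e ->
  exists2 d : R, 0 < d & forall x y, `|x - y| < d -> `|g x - g y| < e.
Proof.
move=> tg e e0; have [L gL] := test_fun_support tg; have cg := tg.1.
pose close (d x : R) := forall y, `|x - y| < d -> `|g x - g y| < e.
have /compact_near_coveringP/(_ _ (0:R)^'+ close _) : compact `[- (L + 1), L + 1].
  exact: segment_compact.
have local_close (x : R) : \forall x' \near x & d \near 0^'+, close d x'.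
  have /nbhs_ballP[r /= r0 gxr] : \forall z \near x, `|g x - g z| < e / 2.
    by apply: (cvgr_dist_lt _ _ (cg x)); rewrite divr_gt0.
  near=> x' d => y /= x'y.
  have xx' : `|x - x'| < r / 2.
    by near: x'; apply/nbhs_ballP; exists (r / 2) => //=; rewrite divr_gt0.
  have dr : d < r / 2 by near: d; apply: nbhs_right_lt; rewrite divr_gt0.
  have gx' : `|g x - g x'| < e / 2 by apply: gxr; rewrite /ball /=; lra.
  have gy : `|g x - g y| < e / 2.
    apply: gxr; rewrite /ball /=.
    by have := ler_distD x' x y; lra.
  by have := ler_distD (g x) (g x') (g y); rewrite (distrC (g x') (g x)); lra.
case/(_ (fun x _ => local_close x))/nbhs_ballP => r /= r0 hr.
have Kclose : forall x, `|x| <= L + 1 -> close (r / 2) x.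
  move=> x xL; apply: (hr (r / 2)); last by rewrite /= in_itv /= -ler_norml.
    by rewrite /ball /= sub0r normrN ger0_norm ?divr_ge0 ?ltW //; lra.
  by rewrite divr_gt0.
exists (Num.min (r / 2) 1); first by rewrite lt_min ltr01 divr_gt0.
move=> x y; rewrite lt_min => /andP[xyr xy1].
have [xL|xL] := leP `|x| (L + 1); first exact: Kclose.
have yL : L < `|y| by have := ler_distD y x 0; rewrite !subr0; lra.
by rewrite !gL ?subrr ?normr0 //; lra.
Unshelve. all: by end_near.
Qed.

End test_functions.

Section weak_convergence.
Variable R : realType.
Implicit Types (P Q : probability R R) (Ps : nat -> probability R R) (g : R -> R).

Definition wcvg Ps P :=
  forall g, bounded_continuous g -> Ex (Ps n) g @[n --> \oo] --> Ex P g.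

Definition vcvg Ps P :=
  forall g, test_fun g -> Ex (Ps n) g @[n --> \oo] --> Ex P g.

Lemma Ex_cutoff_cvg P : Ex P (cutoff n%:R) @[n --> \oo] --> (1 : R).
Proof.
have := @dominated_convergence _ _ R P setT measurableT
  (fun n x => (cutoff n%:R x)%:E) (cst 1%E) (cst 1%E).
case.
- move=> n; apply/measurable_realfun.measurable_EFinP.
  exact: (bounded_measurable_cutoff _).1.
- exact: measurable_cst.
- apply: aeW => x _; apply: cvg_near_cst.
  by near=> n; rewrite cutoff1 //; near: n; exact: nbhs_infty_ger.
- by have := bounded_integrable P (bounded_measurable_cst 1).
- by apply: aeW => x n _; rewrite /= lee_fin ger0_norm ?cutoff_ge0 ?cutoff_le1.
move=> _ _; rewrite (integralEx P (bounded_measurable_cst 1)) Ex_cst.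
exact: fine_cvg.
Unshelve. all: by end_near.
Qed.

Lemma tight P (e : R) : 0 < e -> exists L : R, 1 - Ex P (cutoff L) <= e.
Proof.
move=> e0; have /cvgrPdist_le/(_ e e0)[N _ hN] := Ex_cutoff_cvg P.
by exists N%:R; apply: le_trans (ler_norm _) (hN N (leqnn N)).
Qed.

Lemma tight_cvg Ps P (e : R) : 0 < e ->
  (forall L, Ex (Ps n) (cutoff L) @[n --> \oo] --> Ex P (cutoff L)) ->
  exists L : R, 1 - Ex P (cutoff L) <= e /\
    \forall n \near \oo, 1 - Ex (Ps n) (cutoff L) <= 2 * e.
Proof.
move=> e0 cvg_cutoff; have [L PL] := tight P e0; exists L; split => //.
near=> n; have : `|Ex P (cutoff L) - Ex (Ps n) (cutoff L)| <= e.
  by near: n; exact: cvgr_dist_le (cvg_cutoff L) _ e0.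
by rewrite ler_norml => /andP[]; lra.
Unshelve. all: by end_near.
Qed.

Lemma normr_Ex_le_tail Q g (e M L : R) : bounded_measurable g ->
  (forall x, `|g x| <= e + M * (1 - cutoff L x)) ->
  `|Ex Q g| <= e + M * (1 - Ex Q (cutoff L)).
Proof.
move=> bg gb; have bc := bounded_measurable_cutoff L.
have bcst := @bounded_measurable_cst _ R R.
have btail : bounded_measurable (fun x => M * (1 - cutoff L x)).
  by apply: bounded_measurableM => //; exact: bounded_measurableB.
apply: le_trans (normr_Ex_le Q bg) _.
rewrite -[X in X + _](Ex_cst Q) -[X in M * (X - _)](Ex_cst Q) -ExB // -ExZ;
  last exact: bounded_measurableB.
rewrite -ExD //; apply: ler_Ex => //; first exact: bounded_measurable_norm.
exact: bounded_measurableD.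
Qed.

Lemma normr_Ex_sub_cutoff Q g (M L d : R) : bounded_measurable g ->
  (forall x, `|g x| <= M) -> 1 - Ex Q (cutoff L) <= d ->
  `|Ex Q g - Ex Q (fun x => g x * cutoff L x)| <= M * d.
Proof.
move=> bg gM Qd; have bc := bounded_measurable_cutoff L.
have M0 : 0 <= M by exact: le_trans (gM 0).
rewrite -ExB //; last exact: bounded_measurableM.
apply: le_trans (ler_wpM2l M0 Qd); rewrite -[X in _ <= X]add0r.
apply: normr_Ex_le_tail => [|x].
  by apply: bounded_measurableB => //; exact: bounded_measurableM.
have c1 : 0 <= 1 - cutoff L x by rewrite subr_ge0 cutoff_le1.
by rewrite add0r -{1}[g x]mulr1 -mulrBr normrM [`|1 - _|]ger0_norm // ler_wpM2r.
Qed.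

Theorem vcvg_wcvg Ps P : vcvg Ps P -> wcvg Ps P.
Proof.
move=> hv g bg; have [M M0 gM] := bounded_continuous_bound bg.
have bmg := bounded_continuous_measurable bg.
apply/cvgrPdist_le => e e0.
pose η := e / (1 + 3 * M).
have η0 : 0 < η by rewrite divr_gt0 //; lra.
have eη : (1 + 3 * M) * η = e by rewrite /η mulrC divfK //; lra.
have [L [PL PnL]] := tight_cvg η0 (fun L => hv _ (test_fun_cutoff L)).
have gc_cvg := cvgr_dist_le _ _ (hv _ (test_funM_cutoff L bg.1)) _ η0.
near=> n.
have a1 := normr_Ex_sub_cutoff bmg gM PL.
have a2 : `|Ex (Ps n) g - Ex (Ps n) (fun x => g x * cutoff L x)| <= M * (2 * η).
  by apply: normr_Ex_sub_cutoff => //; near: n; exact: PnL.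
have a3 : `|Ex P (fun x => g x * cutoff L x) -
            Ex (Ps n) (fun x => g x * cutoff L x)| <= η.
  by near: n; exact: gc_cvg.
move: a1 a2 a3; rewrite -eη !ler_norml => /andP[? ?] /andP[? ?] /andP[? ?].
by apply/andP; split; lra.
Unshelve. all: by end_near.
Qed.

Lemma weak_cvg_wcvg (rhos : nat -> set R -> \bar R) rho
    (hrs : forall n, is_probability (rhos n)) (hr : is_probability rho) :
  weak_cvg rhos rho -> wcvg (fun n => prob_of (hrs n)) (prob_of hr).
Proof.
move=> rhos_rho; apply: vcvg_wcvg => g tg.
have bg := bounded_continuous_measurable (test_fun_bounded_continuous tg).
have := rhos_rho g tg; rewrite integral_prob_of //.
by under eq_fun do rewrite integral_prob_of //; exact: fine_cvg.
Qed.

End weak_convergence.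

Section uniform_convergence_on_compacts.
Variable R : realType.

Lemma equicontinuous_cvg_compact (K : set R) (G : nat -> R -> R) (G0 : R -> R)
    (e d : R) : compact K -> 0 < d ->
  (forall x, \forall n \near \oo, `|G0 x - G n x| <= e) ->
  (forall n x y, `|x - y| < d -> `|G n x - G n y| <= e) ->
  (forall x y, `|x - y| < d -> `|G0 x - G0 y| <= e) ->
  \forall n \near \oo, forall x, K x -> `|G0 x - G n x| <= 3 * e.
Proof.
move=> /compact_near_coveringP cK d0 G_cvg G_eq G0_eq.
pose close n x := `|G0 x - G n x| <= 3 * e.
apply: (cK _ \oo close _) => x _.
near=> x' n; rewrite /close.
have xx' : `|x - x'| < d by near: x'; apply/nbhs_ballP; exists d.
have Gx : `|G0 x - G n x| <= e by near: n; exact: G_cvg.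
move: Gx (G_eq n _ _ xx') (G0_eq _ _ xx'); rewrite !ler_norml.
by move=> /andP[? ?] /andP[? ?] /andP[? ?]; apply/andP; split; lra.
Unshelve. all: by end_near.
Qed.

End uniform_convergence_on_compacts.

Section convolution.
Variable R : realType.
Implicit Types (P Q : probability R R) (Ps Qs : nat -> probability R R)
  (g : R -> R).

Definition addRR (z : R * R) : R := z.1 + z.2.

Lemma measurable_addRR : measurable_fun setT addRR.
Proof.
exact: measurable_realfun.measurable_funD measurable_fst measurable_snd.
Qed.

HB.instance Definition _ :=
  isMeasurableFun.Build _ _ _ _ addRR measurable_addRR.

Definition pconv P Q : probability R R := distribution (P \x Q)%E addRR.

Lemma convE P Q : Defs.conv P Q = pconv P Q.
Proof.
apply/funext => A; rewrite /Defs.conv /pconv /distribution /pushforward.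
rewrite /product_measure1; congr integral; apply/funext => x /=.
by congr (Q _); apply/seteqP; split => y; rewrite /xsection /= inE.
Qed.

Lemma continuous_shift (x : R) : continuous (fun y => x + y).
Proof. by move=> y; apply: cvgD; [exact: cvg_cst|exact: cvg_id]. Qed.

Lemma measurable_shift (x : R) : measurable_fun setT (fun y => x + y).
Proof.
by apply: measurable_realfun.continuous_measurable_fun; exact: continuous_shift.
Qed.

Lemma bounded_measurable_shift g (x : R) : bounded_measurable g ->
  bounded_measurable (fun y => g (x + y)).
Proof.
case=> mg [M gM]; split; last by exists M.
exact: measurableT_comp mg (measurable_shift x).
Qed.

Lemma Ex_pconv P Q g : bounded_measurable g ->
  Ex (pconv P Q) g = Ex P (fun x => Ex Q (fun y => g (x + y))).
Proof.
move=> bg; have [mg [M gM]] := bg.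
have mgadd : measurable_fun setT (g \o addRR).
  exact: measurableT_comp mg measurable_addRR.
rewrite /Ex /Rintegral /pconv integral_distribution //; last 2 first.
- exact/measurable_realfun.measurable_EFinP.
- by apply: bounded_integrable; split => //; exists M.
rewrite -integral12_prod_meas1 /=; last first.
  by apply: bounded_integrable; split => //; exists M.
congr fine; apply: eq_integral => x _.
by rewrite /fubini_F /= integralEx //; exact: bounded_measurable_shift.
Qed.

Definition shift_mean Q g x : R := Ex Q (fun y => g (x + y)).

Lemma normr_shift_mean_le Q g (M : R) : bounded_measurable g ->
  (forall x, `|g x| <= M) -> forall x, `|shift_mean Q g x| <= M.
Proof.
by move=> bg gM x; apply: normr_Ex_bound => //; exact: bounded_measurable_shift.
Qed.

Lemma shift_mean_equicontinuous g (e : R) : test_fun g -> 0 < e ->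
  exists2 d : R, 0 < d & forall Q x x', `|x - x'| < d ->
    `|shift_mean Q g x - shift_mean Q g x'| <= e.
Proof.
move=> tg e0; have [d d0 gd] := test_fun_unif_continuous tg e0.
have bg := bounded_continuous_measurable (test_fun_bounded_continuous tg).
exists d => // Q x x' xx'.
rewrite /shift_mean -ExB; try exact: bounded_measurable_shift.
apply: normr_Ex_bound => [|y].
  by apply: bounded_measurableB; exact: bounded_measurable_shift.
by apply/ltW/gd; rewrite opprD addrACA subrr addr0.
Qed.

Lemma shift_mean_bounded_continuous Q g : test_fun g ->
  bounded_continuous (shift_mean Q g).
Proof.
move=> tg; have bcg := test_fun_bounded_continuous tg.
have [M M0 gM] := bounded_continuous_bound bcg.
have bg := bounded_continuous_measurable bcg.
split; last by exists M; exact: normr_shift_mean_le.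
move=> x; apply/cvgrPdist_le => e e0.
have [d d0 hd] := shift_mean_equicontinuous tg e0.
by near=> z; apply: hd; near: z; apply/nbhs_ballP; exists d.
Unshelve. all: by end_near.
Qed.

Lemma shift_mean_cvg_compact Qs Q g (L e : R) : test_fun g -> wcvg Qs Q ->
  0 < e -> \forall n \near \oo, forall x, `|x| <= L ->
    `|shift_mean Q g x - shift_mean (Qs n) g x| <= 3 * e.
Proof.
move=> tg QsQ e0; have bcg := test_fun_bounded_continuous tg.
have [d d0 hd] := shift_mean_equicontinuous tg e0.
have Q_cvg (x : R) :
    \forall n \near \oo, `|shift_mean Q g x - shift_mean (Qs n) g x| <= e.
  have bcgx := bounded_continuous_comp bcg (@continuous_shift x).
  exact: cvgr_dist_le (QsQ _ bcgx) _ e0.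
have K : compact `[- L, L] by exact: segment_compact.
apply: filterS (equicontinuous_cvg_compact K d0 Q_cvg (fun n => hd (Qs n)) (hd Q)).
by move=> n Kn x xL; apply: Kn; rewrite /= in_itv /= -ler_norml.
Qed.

Theorem wcvg_pconv Ps P Qs Q : wcvg Ps P -> wcvg Qs Q ->
  wcvg (fun n => pconv (Ps n) (Qs n)) (pconv P Q).
Proof.
move=> PsP QsQ; apply: vcvg_wcvg => g tg.
have bcg := test_fun_bounded_continuous tg.
have [M M0 gM] := bounded_continuous_bound bcg.
have bg := bounded_continuous_measurable bcg.
have bG Q' : bounded_measurable (shift_mean Q' g).
  exact/bounded_continuous_measurable/shift_mean_bounded_continuous.
rewrite Ex_pconv //; under eq_fun do rewrite Ex_pconv //.
rewrite -!/(shift_mean _ g); apply/cvgrPdist_le => e e0.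
pose η := e / (4 + 4 * M).
have η0 : 0 < η by rewrite divr_gt0 //; lra.
have eη : (4 + 4 * M) * η = e by rewrite /η mulrC divfK //; lra.
have [L [_ PnL]] := tight_cvg η0 (fun L => PsP _ (bounded_continuous_cutoff L)).
have unif := shift_mean_cvg_compact (L + 1) tg QsQ η0.
have GQ_cvg := cvgr_dist_le _ _ (PsP _ (shift_mean_bounded_continuous Q tg)) _ η0.
near=> n.
have unif_n : forall x, `|x| <= L + 1 ->
    `|shift_mean Q g x - shift_mean (Qs n) g x| <= 3 * η.
  by near: n; exact: unif.
have tail : `|Ex (Ps n) (fun x => shift_mean Q g x - shift_mean (Qs n) g x)| <=
    3 * η + 2 * M * (1 - Ex (Ps n) (cutoff L)).
  apply: normr_Ex_le_tail => [|x]; first exact: bounded_measurableB.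
  have [/unif_n|xL] := leP `|x| (L + 1); first by have := cutoff_le1 L x; nra.
  rewrite cutoff0 ?subr0 ?mulr1; last exact: ltW.
  apply: le_trans (ler_normB _ _) _.
  have := normr_shift_mean_le Q bg gM x.
  by have := normr_shift_mean_le (Qs n) bg gM x; lra.
rewrite ExB // in tail.
have tailn : 2 * M * (1 - Ex (Ps n) (cutoff L)) <= 2 * M * (2 * η).
  by apply: ler_wpM2l; [lra|near: n; exact: PnL].
have GQn : `|Ex P (shift_mean Q g) - Ex (Ps n) (shift_mean Q g)| <= η.
  by near: n; exact: GQ_cvg.
move: tail GQn; rewrite -eη !ler_norml => /andP[? ?] /andP[? ?].
by apply/andP; split; lra.
Unshelve. all: by end_near.
Qed.

End convolution.

Section pushforward_and_powers.
Variable R : realType.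
Implicit Types (P : probability R R) (Ps : nat -> probability R R).

Definition mfun_of_continuous (h : R -> R) (ch : continuous h) : {mfun R >-> R} :=
  mfun_Sub (mem_set (measurable_realfun.continuous_measurable_fun ch)).

Lemma Ex_distribution P (X : {mfun R >-> R}) (g : R -> R) :
  bounded_measurable g -> Ex (distribution P X) g = Ex P (g \o X).
Proof.
move=> [mg [M gM]]; rewrite /Ex /Rintegral integral_distribution //.
  exact/measurable_realfun.measurable_EFinP.
apply: bounded_integrable; split; first exact: measurableT_comp.
by exists M => x; exact: gM.
Qed.

Lemma wcvg_distribution Ps P (X : {mfun R >-> R}) : continuous X ->
  wcvg Ps P -> wcvg (fun n => distribution (Ps n) X) (distribution P X).
Proof.
move=> cX PsP g bg; have bmg := bounded_continuous_measurable bg.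
rewrite Ex_distribution //; under eq_fun do rewrite Ex_distribution //.
exact: PsP (bounded_continuous_comp bg cX).
Qed.

Fixpoint pconvn P n : probability R R :=
  if n is n'.+1 then pconv P (pconvn P n') else \d_(0 : R).

Lemma wcvg_cst P : wcvg (fun=> P) P.
Proof. by move=> g _; exact: cvg_cst. Qed.

Lemma wcvg_pconvn Ps P n : wcvg Ps P ->
  wcvg (fun k => pconvn (Ps k) n) (pconvn P n).
Proof.
move=> PsP; elim: n => [|n IH] /=; first exact: wcvg_cst.
exact: wcvg_pconv.
Qed.

Lemma eq_on_measurable_conv (mu mu' nu nu' : set R -> \bar R) :
  (forall A, measurable A -> mu A = mu' A) ->
  (forall A, measurable A -> nu A = nu' A) ->
  forall A, measurable A -> Defs.conv mu nu A = Defs.conv mu' nu' A.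
Proof.
move=> e_mu e_nu A mA; rewrite /Defs.conv (eq_on_measurable_integral _ _ e_mu).
congr integral; apply/funext => x; rewrite e_nu //.
by rewrite -[_ @^-1` _]setTI; exact: measurable_shift.
Qed.

Lemma convn_prob_of rho (hr : is_probability rho) n A : measurable A ->
  convn rho n A = pconvn (prob_of hr) n A.
Proof.
elim: n A => [//|n IH] A mA.
rewrite (_ : pconvn _ n.+1 = pconv (prob_of hr) (pconvn (prob_of hr) n)) // -convE.
by apply: eq_on_measurable_conv => // B mB; rewrite prob_ofE.
Qed.

End pushforward_and_powers.

Section tannery.
Variable R : realType.
Local Open Scope ereal_scope.

Lemma cvg_nneseries_dominated (w : nat -> R) (u : nat -> nat -> R) (v : nat -> R)
    (C : R) : (forall n, (0 <= w n)%R) -> \sum_(n <oo) (w n)%:E < +oo ->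
  (forall k n, (0 <= u k n <= C)%R) -> (forall n, (0 <= v n)%R) ->
  (forall n, u k n @[k --> \oo] --> v n) ->
  \sum_(n <oo) (w n * u k n)%:E @[k --> \oo] --> \sum_(n <oo) (w n * v n)%:E.
Proof.
move=> w0 wfin uC v0 uv.
have C0 : (0 <= C)%R by case/andP: (uC 0 0)%N => /le_trans; apply.
have wu0 k n : 0 <= (w n * u k n)%:E.
  by rewrite lee_fin mulr_ge0 //; case/andP: (uC k n).
have wC0 n : 0 <= (w n * C)%:E by rewrite lee_fin mulr_ge0.
have := @dominated_convergence _ _ R counting setT measurableT
  (fun k n => (w n * u k n)%:E) (fun n => (w n * v n)%:E) (fun n => (w n * C)%:E).
case => //.
- by apply: aeW => n _; apply: cvg_EFin; [exact: nearW|exact: cvgMr].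
- apply/integrableP; split => //; rewrite ge0_integral_count //.
  under eq_eseriesr do rewrite gee0_abs // EFinM muleC.
  rewrite nneseriesZl => [|n _]; last by rewrite lee_fin.
  by rewrite lte_mul_pinfty ?lee_fin.
- apply: aeW => n k _; rewrite /= lee_fin normrM ger0_norm //.
  by apply: ler_wpM2l => //; case/andP: (uC k n) => u0 uC'; rewrite ger0_norm.
move=> _ _; rewrite ge0_integral_count; last by move=> n; rewrite lee_fin mulr_ge0.
by under eq_fun do rewrite ge0_integral_count //.
Qed.

End tannery.

Section poisson_mixture.
Variables (R : realType) (lam : R).
Hypothesis lam_gt0 : 0 < lam.
Local Notation P_ := (poissonP lam).

Lemma poissonP_ge0 n : 0 <= P_ n.
Proof.
by rewrite /poissonP mulr_ge0 ?invr_ge0 ?mulr_ge0 ?expR_ge0 ?exprn_ge0 ?ltW.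
Qed.

Lemma poissonP_sum : (\sum_(n <oo) (P_ n)%:E)%E = 1%E.
Proof.
have <- : poisson_prob lam 0 setT = 1%E by exact: probability_setT.
rewrite /poisson_prob lam_gt0 -nneseries_esumT => [|n]; last first.
  by rewrite lee_fin poisson_pmf_ge0.
apply: eq_eseriesr => n _; congr EFin.
by rewrite /poisson_pmf lam_gt0 /poissonP; ring.
Qed.

Definition poisson_mix (m : nat -> probability R R) : set R -> \bar R :=
  fun A => (\sum_(0 <= n <oo) ((P_ n)%:E * m n A))%E.

Lemma poisson_mixE m :
  poisson_mix m = mseries (fun n => mscale (NngNum (poissonP_ge0 n)) (m n)) 0.
Proof. by []. Qed.

Lemma poisson_mix_prob m : is_probability (poisson_mix m).
Proof.
rewrite poisson_mixE; split => //; first exact: measure_semi_sigma_additive.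
rewrite -poisson_mixE -poissonP_sum; apply: eq_eseriesr => n _.
by rewrite probability_setT mule1.
Qed.

Lemma Ex_poisson_mix m (g : R -> R) :
  bounded_measurable g -> (forall x, 0 <= g x) ->
  (Ex (prob_of (poisson_mix_prob m)) g)%:E =
  (\sum_(n <oo) (P_ n * Ex (m n) g)%:E)%E.
Proof.
move=> bg g0; rewrite -integral_prob_of // poisson_mixE.
rewrite ge0_integral_measure_series //; last 2 first.
- by move=> x _; rewrite lee_fin.
- by apply/measurable_realfun.measurable_EFinP; case: bg.
apply: eq_eseriesr => n _; rewrite ge0_integral_mscale //; last 2 first.
- by apply/measurable_realfun.measurable_EFinP; case: bg.
- by move=> x _; rewrite lee_fin.
by rewrite integralEx // EFinM.
Qed.

Lemma wcvg_poisson_mix (ms : nat -> nat -> probability R R)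
    (m : nat -> probability R R) :
  (forall n, wcvg (fun k => ms k n) (m n)) ->
  wcvg (fun k => prob_of (poisson_mix_prob (ms k)))
       (prob_of (poisson_mix_prob m)).
Proof.
move=> msm g bg; have [M M0 gM] := bounded_continuous_bound bg.
pose phi x := g x + M.
have bphi : bounded_continuous phi.
  split; first by move=> x; apply: cvgD; [exact: bg.1|exact: cvg_cst].
  exists (M + M) => x; apply: le_trans (ler_normD _ _) _.
  by rewrite [`|M|]ger0_norm // lerD.
have bmphi := bounded_continuous_measurable bphi.
have phi_ge0 x : 0 <= phi x by have := gM x; rewrite ler_norml /phi => /andP[]; lra.
have phiE Q : Ex Q g = Ex Q phi - M.
  rewrite ExD ?Ex_cst ?addrK //; first exact: bounded_continuous_measurable.
  exact: bounded_measurable_cst.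
rewrite phiE; under eq_fun do rewrite phiE.
apply: cvgB; last exact: cvg_cst.
suff : (Ex (prob_of (poisson_mix_prob (ms k))) phi)%:E @[k --> \oo] -->
    (Ex (prob_of (poisson_mix_prob m)) phi)%:E by exact: fine_cvg.
rewrite Ex_poisson_mix //; under eq_fun do rewrite Ex_poisson_mix //.
apply: (@cvg_nneseries_dominated _ _ _ _ (M + M)) => [n|||n|n].
- exact: poissonP_ge0.
- by rewrite poissonP_sum ltry.
- move=> k n; rewrite Ex_ge0 //=; apply: le_trans (ler_norm _) _.
  apply: normr_Ex_bound => // x; rewrite ger0_norm // lerD //.
  exact: le_trans (ler_norm _) (gM x).
- exact: Ex_ge0.
- exact: msm.
Qed.

Lemma continuous_on_P_poisson_mix (S : (set R -> \bar R) -> set R -> \bar R)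
    (mm : probability R R -> nat -> probability R R) :
  (forall rho (hr : is_probability rho) A, measurable A ->
    S rho A = poisson_mix (mm (prob_of hr)) A) ->
  (forall Ps P n, wcvg Ps P -> wcvg (fun k => mm (Ps k) n) (mm P n)) ->
  continuous_on_P S.
Proof.
move=> SE mm_cvg; split => [rho [hr _]|rhos rho hrs [hr _] rhos_rho phi tphi].
  exact: is_probability_eq (SE rho hr) (poisson_mix_prob _).
have bphi := test_fun_bounded_continuous tphi.
have integralS rho' (hr' : is_probability rho') :
    (\int[S rho']_x (phi x)%:E)%E =
    (Ex (prob_of (poisson_mix_prob (mm (prob_of hr')))) phi)%:E.
  rewrite -integral_prob_of; last exact: bounded_continuous_measurable.
  by apply: eq_on_measurable_integral => A mA; rewrite SE.
rewrite (integralS _ hr); under eq_fun do rewrite (integralS _ (hrs _).1).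
apply: cvg_EFin; first exact: nearW.
apply: wcvg_poisson_mix bphi => n; apply: mm_cvg.
exact: weak_cvg_wcvg.
Qed.

End poisson_mixture.

Section Sigma_as_poisson_mixture.
Variables (R : realType) (f : R -> R) (lam : R).
Hypothesis f_cont : continuous f.

Lemma hk_continuous k : continuous (hk f k).
Proof. by move=> x; apply: cvgM; [exact: f_cont|exact: cvg_cst]. Qed.

Definition hk_mfun k : {mfun R >-> R} := mfun_of_continuous (@hk_continuous k).

Definition SigmaX_term x (P : probability R R) n : probability R R :=
  distribution (pconv \d_x (pconvn P n)) (hk_mfun n.+1).

Definition Sigma_term (P : probability R R) n : probability R R :=
  distribution (pconvn P n.+1) (hk_mfun n.+1).

Lemma SigmaX_poisson_mix x rho (hr : is_probability rho) A : measurable A ->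
  SigmaX f lam x rho A = poisson_mix lam (SigmaX_term x (prob_of hr)) A.
Proof.
move=> mA; apply: eq_eseriesr => n _; congr (_ * _)%E.
have mhA : measurable (hk f n.+1 @^-1` A).
  exact: (measurable_funPTI (hk_mfun n.+1)).
transitivity (Defs.conv \d_x (pconvn (prob_of hr) n) (hk f n.+1 @^-1` A)).
  by apply: eq_on_measurable_conv => // B mB; exact: convn_prob_of.
by rewrite convE.
Qed.

Lemma Sigma_poisson_mix rho (hr : is_probability rho) A : measurable A ->
  Sigma f lam rho A = poisson_mix lam (Sigma_term (prob_of hr)) A.
Proof.
move=> mA; apply: eq_eseriesr => n _; congr (_ * _)%E.
by apply: convn_prob_of; exact: (measurable_funPTI (hk_mfun n.+1)).
Qed.

Lemma wcvg_SigmaX_term x Ps P n : wcvg Ps P ->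
  wcvg (fun k => SigmaX_term x (Ps k) n) (SigmaX_term x P n).
Proof.
move=> PsP; apply: wcvg_distribution; first exact: hk_continuous.
by apply: wcvg_pconv; [exact: wcvg_cst|exact: wcvg_pconvn].
Qed.

Lemma wcvg_Sigma_term Ps P n : wcvg Ps P ->
  wcvg (fun k => Sigma_term (Ps k) n) (Sigma_term P n).
Proof.
move=> PsP; apply: wcvg_distribution; first exact: hk_continuous.
exact: wcvg_pconvn.
Qed.

End Sigma_as_poisson_mixture.

Unset Implicit Arguments.

Theorem theorem6 (R : realType) (f : R -> R) (a b lam : R)
  (f_cont : continuous f) (a_gt0 : 0 < a)
  (f_bound : forall x : R, `|f x| <= a * cosh (b * x))
  (lam_gt0 : 0 < lam) :
  (forall x : R, continuous_on_P (SigmaX f lam x)) /\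
  continuous_on_P (Sigma f lam).
Proof.
split => [x|].
- apply: (continuous_on_P_poisson_mix (mm := SigmaX_term f_cont x) lam_gt0).
    exact: SigmaX_poisson_mix.
  exact: wcvg_SigmaX_term.
- apply: (continuous_on_P_poisson_mix (mm := Sigma_term f_cont) lam_gt0).
    exact: Sigma_poisson_mix.
  exact: wcvg_Sigma_term.
Qed.
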